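(* Consider the discrete setting described in the context and let $(F^n)_{n\ge0}=(f^n_{ij},g^n_{ij})$ solve the linearized scheme given there. Let $h^n_{ij}=f^n_{ij}-g^n_{ij}$ and define the discrete moments $u^n_{h,i}=\sum_j\Delta v\,h^n_{ij}$, $J^n_{h,i}=\sum_j\Delta v\,v_j h^n_{ij}$, $S^n_{h,i}=\sum_j\Delta v\,(v_j^2-D_0^\Delta)h^n_{ij}$, and $J^n_{f,i}=\sum_j\Delta v\,v_jf^n_{ij}$, $J^n_{g,i}=\sum_j\Delta v\,v_jg^n_{ij}$. Then for all $n\ge0$: $$\|u^n_h\|_2=C_u^*\|\Pi^\Delta F^n\|_\Delta,\quad \|J^n_h\|_2\le C^*_{J1}\|F^n\|_\Delta,\quad \|J^n_h\|_2\le C^*_{J1}\|(I-\Pi^\Delta)F^n\|_\Delta,$$ $$\|S^n_h\|_2\le C^*_S\|(I-\Pi^\Delta)F^n\|_\Delta,\quad \|(\rho_\infty^* )^{-1}J^n_f-\rho_\infty^*J^n_g\|_2\le C^*_{J2}\|(I-\Pi^\Delta)F^n\|_\Delta,$$ where $C_u^*=\sqrt{((\rho_\infty^* )^2+1)/\rho_\infty^*}$, $C^*_{J1}=\sqrt{2\max(\rho_\infty^*\overline D_1,(\rho_\infty^* )^{-1}\overline D_2)}$, $C_S^*=\sqrt{2\max\big(\rho_\infty^*(\overline Q_1-2\underline D_0\underline D_1+\overline D_0^2),(\rho_\infty^* )^{-1}(\overline Q_2-2\underline D_0\underline D_2+\overline D_0^2)\big)}$, $C^*_{J2}=\max((\rho_\infty^*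 )^{-1},\rho_\infty^* )C^*_{J1}$.
   Context: Space mesh: $N$ uniform cells of length $\Delta x$ of the torus, indexed by $i\in\mathcal I=\mathbb Z/N\mathbb Z$ (periodic). Velocity mesh: $\Delta v=v^*/L$, cells indexed by $j\in\mathcal J=\{-L+1,\dots,L\}$ with midpoints $v_j=(j-\tfrac12)\Delta v$. Time step $\Delta t>0$; $\lambda=\Delta x/(2\Delta t)$ a fixed positive constant. Fixed $\rho_\infty^*>0$. For $k=1,2$: $\chi_{k,j}>0$, $\chi_{k,j}=\chi_{k,1-j}$, $\sum_j\Delta v\,\chi_{k,j}=1$, $0<\underline D_k\le D_k^\Delta:=\sum_j\Delta v\,v_j^2\chi_{k,j}\le\overline D_k$, $Q_k^\Delta:=\sum_j\Delta v\,v_j^4\chi_{k,j}\le\overline Q_k$. $D_0^\Delta=\frac{(\rho_\infty^* )^2D_1^\Delta+D_2^\Delta}{(\rho_\infty^* )^2+1}$, and $\underline D_0,\overline D_0$ are constants with $\underline D_0\le D_0^\Delta\le\overline D_0$. Densities $\rho_{f,i}=\sum_j\Delta v f_{ij}$, $\rho_{g,i}=\sum_j\Delta v g_{ij}$. Linearized scheme ($n\ge0$): $\frac{f^{n+1}_{ij}-f^n_{ij}}{\Delta t}+\frac{1}{\Delta x\Delta v}(\mathcal F^{n+1}_{i+\frac12,j}-\mathcal F^{n+1}_{i-\frac12,j})=-\rho_\infty^*\chi_{1,j}\rho^{n+1}_{g,i}-(\rho_\infty^* )^{-1}f^{n+1}_{ij}$ and $\frac{g^{n+1}_{ij}-g^n_{ij}}{\Delta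 t}+\frac{1}{\Delta x\Delta v}(\mathcal G^{n+1}_{i+\frac12,j}-\mathcal G^{n+1}_{i-\frac12,j})=-(\rho_\infty^* )^{-1}\chi_{2,j}\rho^{n+1}_{f,i}-\rho_\infty^*g^{n+1}_{ij}$, with $\mathcal F^{n+1}_{i+\frac12,j}=\Delta v\frac{v_j}{2}(f^{n+1}_{i+1,j}+f^{n+1}_{ij})-\Delta v\lambda(f^{n+1}_{i+1,j}-f^{n+1}_{ij})$ and $\mathcal G$ likewise with $g$. Norms: $\|u\|_2^2=\sum_i\Delta x\,u_i^2$; $\|F\|_\Delta^2=\sum_{i,j}\Delta x\Delta v\big(\frac{f_{ij}^2}{\chi_{1,j}\rho_\infty^*}+\frac{g_{ij}^2\rho_\infty^*}{\chi_{2,j}}\big)$. Projection: $(\Pi^\Delta F)_{ij}=\frac{\rho_{f,i}-\rho_{g,i}}{(\rho_\infty^* )^2+1}((\rho_\infty^* )^2\chi_{1,j},-\chi_{2,j})$. *)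

From mathcomp Require Import all_boot all_order all_algebra reals.
Set Implicit Arguments. Unset Strict Implicit. Unset Printing Implicit Defensive.
Import Order.TTheory GRing.Theory Num.Theory.
Local Open Scope ring_scope.

Section Defs.
Variable R : realType.
Variables N L : nat.

(* space index i : 'I_N (periodic, via ordS / ord_pred);
   velocity index k : 'I_(2*L) encodes j = k - L + 1 in {-L+1,...,L} *)
Definition velidx (k : 'I_(2 * L)) : int := (nat_of_ord k)%:Z - L%:Z + 1.

Definition dvel (vstar : R) : R := vstar / L%:R.

Definition vel (dv : R) (k : 'I_(2 * L)) : R := ((velidx k)%:~R - 2^-1) * dv.

Definition grid := 'I_N -> 'I_(2 * L) -> R.

Definition dens (dv : R) (h : grid) (i : 'I_N) : R := \sum_k dv * h i k.
Definition flux_mom (dv : R) (h : grid) (i : 'I_N) : R := \sum_k dv * vel dv k * h i k.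
Definition S_mom (dv D0 : R) (h : grid) (i : 'I_N) : R :=
  \sum_k dv * (vel dv k ^+ 2 - D0) * h i k.

Definition numflux (dv lam : R) (h : grid) (i : 'I_N) (k : 'I_(2 * L)) : R :=
  dv * (vel dv k / 2) * (h (ordS i) k + h i k) - dv * lam * (h (ordS i) k - h i k).

Definition Dmom (dv : R) (chi : 'I_(2 * L) -> R) : R := \sum_k dv * vel dv k ^+ 2 * chi k.
Definition Qmom (dv : R) (chi : 'I_(2 * L) -> R) : R := \sum_k dv * vel dv k ^+ 4 * chi k.
Definition D0mom (dv rho : R) (chi1 chi2 : 'I_(2 * L) -> R) : R :=
  (rho ^+ 2 * Dmom dv chi1 + Dmom dv chi2) / (rho ^+ 2 + 1).

Definition scheme_step (dx dt dv lam rho : R) (chi1 chi2 : 'I_(2 * L) -> R)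
    (f0 g0 f1 g1 : grid) : Prop :=
  forall i k,
    (f1 i k - f0 i k) / dt
      + (numflux dv lam f1 i k - numflux dv lam f1 (ord_pred i) k) / (dx * dv)
      = - rho * chi1 k * dens dv g1 i - rho^-1 * f1 i k
  /\ (g1 i k - g0 i k) / dt
      + (numflux dv lam g1 i k - numflux dv lam g1 (ord_pred i) k) / (dx * dv)
      = - rho^-1 * chi2 k * dens dv f1 i - rho * g1 i k.

Definition norm2 (dx : R) (u : 'I_N -> R) : R := Num.sqrt (\sum_i dx * u i ^+ 2).

Definition normD (dx dv rho : R) (chi1 chi2 : 'I_(2 * L) -> R) (f g : grid) : R :=
  Num.sqrt (\sum_i \sum_k dx * dv *
              (f i k ^+ 2 / (chi1 k * rho) + g i k ^+ 2 * rho / chi2 k)).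

Definition projf (dv rho : R) (chi1 : 'I_(2 * L) -> R) (f g : grid) : grid :=
  fun i k => (dens dv f i - dens dv g i) / (rho ^+ 2 + 1) * (rho ^+ 2 * chi1 k).
Definition projg (dv rho : R) (chi2 : 'I_(2 * L) -> R) (f g : grid) : grid :=
  fun i k => (dens dv f i - dens dv g i) / (rho ^+ 2 + 1) * (- chi2 k).

Definition perpf (dv rho : R) (chi1 : 'I_(2 * L) -> R) (f g : grid) : grid :=
  fun i k => f i k - projf dv rho chi1 f g i k.
Definition perpg (dv rho : R) (chi2 : 'I_(2 * L) -> R) (f g : grid) : grid :=
  fun i k => g i k - projg dv rho chi2 f g i k.

Definition hdiff (f g : grid) : grid := fun i k => f i k - g i k.

End Defs.

Section Consts.
Variable R : realType.
Definition C_u (rho : R) : R := Num.sqrt ((rho ^+ 2 + 1) / rho).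
Definition C_J1 (rho Dhi1 Dhi2 : R) : R :=
  Num.sqrt (2 * Num.max (rho * Dhi1) (rho^-1 * Dhi2)).
Definition C_S (rho Dlo0 Dhi0 Dlo1 Dlo2 Qhi1 Qhi2 : R) : R :=
  Num.sqrt (2 * Num.max (rho * (Qhi1 - 2 * Dlo0 * Dlo1 + Dhi0 ^+ 2))
                         (rho^-1 * (Qhi2 - 2 * Dlo0 * Dlo2 + Dhi0 ^+ 2))).
Definition C_J2 (rho Dhi1 Dhi2 : R) : R := Num.max rho^-1 rho * C_J1 rho Dhi1 Dhi2.
End Consts.

(* Every estimate is proved cell by cell in space and then summed against dx.
   In a cell, a velocity moment of h = f - g is the moment of f minus that of g,
   and the Cauchy-Schwarz inequality with the weights chi1 * rho and chi2 / rho of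
   ||.||_Delta bounds their squares by rho * sum dv a^2 chi1 and
   rho^-1 * sum dv a^2 chi2 times the cell's share of ||F||_Delta^2; for
   a = v^2 - D0 these weights are Q - 2 D0 D + D0^2.  Replacing F by (I - Pi)F
   leaves the relevant moments unchanged: for a = v since the odd moments of the
   even chi_k vanish, for a = v^2 - D0 since D0 is exactly the mixture of D1 and
   D2 killed by Pi.  The density identity is a direct computation using that the
   chi_k have unit mass. *)

From mathcomp Require Import all_boot all_order all_algebra reals.
From mathcomp Require Import ring lra zify.
Set Implicit Arguments. Unset Strict Implicit. Unset Printing Implicit Defensive.
Import Order.TTheory GRing.Theory Num.Theory.
Local Open Scope ring_scope.

Lemma sum_mul_sqr_le (R : realFieldType) (I : finType) (x y c : I -> R) :
  (forall k, 0 < c k) ->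
  (\sum_k x k * y k) ^+ 2 <= (\sum_k x k ^+ 2 * c k) * (\sum_k y k ^+ 2 / c k).
Proof.
move=> c_gt0; set A := \sum_k _ * c k; set B := \sum_k _ / c k; set Z := \sum_k _.
have AB : A * B = \sum_k \sum_l x k ^+ 2 * c k * (y l ^+ 2 / c l) by rewrite big_distrlr.
have BA : A * B = \sum_k \sum_l x l ^+ 2 * c l * (y k ^+ 2 / c k) by rewrite AB exchange_big.
have ZZ : Z ^+ 2 = \sum_k \sum_l x k * y k * (x l * y l) by rewrite expr2 big_distrlr.
have lagrange : \sum_k \sum_l (x k * c k * y l - x l * c l * y k) ^+ 2 / (c k * c l)
                = A * B + A * B - 2 * Z ^+ 2.
  rewrite {1}AB BA ZZ mulr_sumr -big_split -sumrB; apply: eq_bigr => k _.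
  rewrite mulr_sumr -big_split -sumrB; apply: eq_bigr => l _ /=.
  by field; rewrite !gt_eqF.
have : 0 <= \sum_k \sum_l (x k * c k * y l - x l * c l * y k) ^+ 2 / (c k * c l).
  by apply: sumr_ge0 => k _; apply: sumr_ge0 => l _; rewrite divr_ge0 ?sqr_ge0 ?mulr_ge0 ?ltW.
rewrite lagrange; lra.
Qed.

Lemma sqr_lin_comb_le (R : realDomainType) (a b x y P Q m M : R) :
  `|a| <= M -> `|b| <= M -> x ^+ 2 <= m * P -> y ^+ 2 <= m * Q ->
  (a * x - b * y) ^+ 2 <= M ^+ 2 * (2 * m * (P + Q)).
Proof.
move=> aM bM xP yQ.
have a2M : a ^+ 2 <= M ^+ 2.
  by rewrite -real_normK ?num_real // lerXn2r ?nnegrE ?(le_trans _ aM).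
have b2M : b ^+ 2 <= M ^+ 2.
  by rewrite -real_normK ?num_real // lerXn2r ?nnegrE ?(le_trans _ bM).
have axP : a ^+ 2 * x ^+ 2 <= M ^+ 2 * (m * P).
  by apply: le_trans (ler_wpM2r (sqr_ge0 x) a2M) _; rewrite ler_wpM2l ?sqr_ge0.
have byQ : b ^+ 2 * y ^+ 2 <= M ^+ 2 * (m * Q).
  by apply: le_trans (ler_wpM2r (sqr_ge0 y) b2M) _; rewrite ler_wpM2l ?sqr_ge0.
have := sqr_ge0 (a * x + b * y); nra.
Qed.

(* flux_mom and S_mom are, up to conversion, vmom with a = vel and a = vel^2 - D0. *)
Definition vmom (R : pzRingType) (I : finType) (dv : R) (a u : I -> R) : R :=
  \sum_k dv * a k * u k.

Lemma vmom_centered (R : comNzRingType) (I : finType) (dv c : R) (b u : I -> R) :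
  \sum_k dv * u k = 1 -> vmom dv (fun k => b k - c) u = vmom dv b u - c.
Proof.
move=> mass1; rewrite -[c in RHS]mulr1 -[1 in RHS]mass1.
by rewrite /vmom mulr_sumr -sumrB; apply: eq_bigr => k _; ring.
Qed.

Lemma vmom_centered_sqr (R : comNzRingType) (I : finType) (dv c : R) (b u : I -> R) :
  \sum_k dv * u k = 1 ->
  vmom dv (fun k => (b k - c) ^+ 2) u
    = vmom dv (fun k => b k ^+ 2) u - 2 * c * vmom dv b u + c ^+ 2.
Proof.
move=> mass1; rewrite -[c ^+ 2 in RHS]mulr1 -[X in c ^+ 2 * X]mass1.
by rewrite /vmom !mulr_sumr -sumrB -big_split; apply: eq_bigr => k _ /=; ring.
Qed.

Lemma vmom_mulr (R : comNzRingType) (I : finType) (dv s : R) (a u : I -> R) :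
  vmom dv a (fun k => u k * s) = vmom dv a u * s.
Proof. by rewrite /vmom mulr_suml; apply: eq_bigr => k _; ring. Qed.

Section WeightedNorm.
Variables (R : realFieldType) (I : finType) (dv : R) (w : I -> R).
Hypotheses (dv_gt0 : 0 < dv) (w_gt0 : forall k, 0 < w k).

Definition wsqnorm (u : I -> R) : R := \sum_k dv * (u k ^+ 2 / w k).

Lemma wsqnorm_ge0 u : 0 <= wsqnorm u.
Proof. by apply: sumr_ge0 => k _; rewrite mulr_ge0 ?divr_ge0 ?sqr_ge0 ?ltW. Qed.

Lemma vmom_sqr_le (a u : I -> R) :
  vmom dv a u ^+ 2 <= vmom dv (fun k => a k ^+ 2) w * wsqnorm u.
Proof.
have dvw_gt0 k : 0 < dv * w k by rewrite mulr_gt0.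
have -> : vmom dv a u = \sum_k a k * (dv * u k) by apply: eq_bigr => k _; ring.
have -> : vmom dv (fun k => a k ^+ 2) w = \sum_k a k ^+ 2 * (dv * w k).
  by apply: eq_bigr => k _; ring.
have -> : wsqnorm u = \sum_k (dv * u k) ^+ 2 / (dv * w k).
  by apply: eq_bigr => k _; field; rewrite !gt_eqF.
exact: sum_mul_sqr_le.
Qed.

End WeightedNorm.

Section VelocityMoments.
Variables (R : realType) (L : nat).

Lemma velidx_rev (k : 'I_(2 * L)) : velidx (rev_ord k) = 1 - velidx k.
Proof. by rewrite /velidx /=; have := ltn_ord k; lia. Qed.

Lemma vel_rev (dv : R) (k : 'I_(2 * L)) : vel dv (rev_ord k) = - vel dv k.
Proof. by rewrite /vel velidx_rev intrB; field. Qed.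

Lemma vmom_vel_even (dv : R) (chi : 'I_(2 * L) -> R) :
  (forall k k', velidx k' = 1 - velidx k -> chi k = chi k') ->
  vmom dv (vel dv) chi = 0.
Proof.
move=> chi_even.
have : vmom dv (vel dv) chi = - vmom dv (vel dv) chi.
  rewrite {1}/vmom (reindex_inj rev_ord_inj) /= -sumrN; apply: eq_bigr => k _.
  by rewrite vel_rev -(chi_even k) ?velidx_rev //; ring.
lra.
Qed.

Lemma vmom_vel_centered_sqr_le (dv c Dlo0 Dhi0 Dlo Qhi : R) (chi : 'I_(2 * L) -> R) :
  \sum_k dv * chi k = 1 -> 0 < c -> Dlo0 <= c -> c <= Dhi0 ->
  0 < Dlo -> Dlo <= Dmom dv chi -> Qmom dv chi <= Qhi ->
  vmom dv (fun k => (vel dv k ^+ 2 - c) ^+ 2) chi <= Qhi - 2 * Dlo0 * Dlo + Dhi0 ^+ 2.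
Proof.
move=> mass1 c_gt0 c_lo c_hi Dlo_gt0 Dlo_le Q_le.
rewrite (vmom_centered_sqr _ (fun k => vel dv k ^+ 2)) //.
have -> : vmom dv (fun k => (vel dv k ^+ 2) ^+ 2) chi = Qmom dv chi.
  by apply: eq_bigr => k _; rewrite -exprM.
have -> : vmom dv (fun k => vel dv k ^+ 2) chi = Dmom dv chi by [].
nra.
Qed.

Lemma D0mom_gt0 (dv rho : R) (chi1 chi2 : 'I_(2 * L) -> R) :
  0 < Dmom dv chi1 -> 0 < Dmom dv chi2 -> 0 < D0mom dv rho chi1 chi2.
Proof.
move=> D1_gt0 D2_gt0; apply: divr_gt0; apply: ltr_wpDl => //.
  by rewrite mulr_ge0 ?sqr_ge0 ?ltW.
exact: sqr_ge0.
Qed.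

End VelocityMoments.

Section Projection.
Variables (R : realType) (N L : nat) (dv rho : R) (chi1 chi2 : 'I_(2 * L) -> R).

Lemma dens_hdiff (p q : grid R N L) i :
  dens dv (hdiff p q) i = dens dv p i - dens dv q i.
Proof. by rewrite /dens -sumrB; apply: eq_bigr => k _; rewrite /hdiff mulrBr. Qed.

Lemma vmom_hdiff a (p q : grid R N L) i :
  vmom dv a (hdiff p q i) = vmom dv a (p i) - vmom dv a (q i).
Proof. by rewrite /vmom -sumrB; apply: eq_bigr => k _; rewrite /hdiff mulrBr. Qed.

Lemma vmom_perpf a (p q : grid R N L) i :
  vmom dv a (perpf dv rho chi1 p q i)
    = vmom dv a (p i)
      - (dens dv p i - dens dv q i) / (rho ^+ 2 + 1) * rho ^+ 2 * vmom dv a chi1.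
Proof.
by rewrite /vmom mulr_sumr -sumrB; apply: eq_bigr => k _; rewrite /perpf /projf; ring.
Qed.

Lemma vmom_perpg a (p q : grid R N L) i :
  vmom dv a (perpg dv rho chi2 p q i)
    = vmom dv a (q i) + (dens dv p i - dens dv q i) / (rho ^+ 2 + 1) * vmom dv a chi2.
Proof.
by rewrite /vmom mulr_sumr -big_split; apply: eq_bigr => k _ /=; rewrite /perpg /projg; ring.
Qed.

Lemma vmom_perp_sub a (p q : grid R N L) i :
  rho ^+ 2 * vmom dv a chi1 + vmom dv a chi2 = 0 ->
  vmom dv a (perpf dv rho chi1 p q i) - vmom dv a (perpg dv rho chi2 p q i)
    = vmom dv a (p i) - vmom dv a (q i).
Proof.
move=> balance; rewrite vmom_perpf vmom_perpg.
have -> : vmom dv a chi2 = - (rho ^+ 2 * vmom dv a chi1).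
  by apply/eqP; rewrite -addr_eq0 addrC balance.
ring.
Qed.

Lemma D0mom_balance :
  rho ^+ 2 * (Dmom dv chi1 - D0mom dv rho chi1 chi2)
    + (Dmom dv chi2 - D0mom dv rho chi1 chi2) = 0.
Proof. by rewrite /D0mom; field; rewrite gt_eqF // ltr_wpDl ?sqr_ge0. Qed.

Lemma vmom_vel_perpf (p q : grid R N L) i :
  (forall k k', velidx k' = 1 - velidx k -> chi1 k = chi1 k') ->
  vmom dv (vel dv) (perpf dv rho chi1 p q i) = vmom dv (vel dv) (p i).
Proof. by move=> chi1_even; rewrite vmom_perpf [vmom _ _ chi1]vmom_vel_even // mulr0 subr0. Qed.

Lemma vmom_vel_perpg (p q : grid R N L) i :
  (forall k k', velidx k' = 1 - velidx k -> chi2 k = chi2 k') ->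
  vmom dv (vel dv) (perpg dv rho chi2 p q i) = vmom dv (vel dv) (q i).
Proof. by move=> chi2_even; rewrite vmom_perpg [vmom _ _ chi2]vmom_vel_even // mulr0 addr0. Qed.

End Projection.

Section Estimates.
Variables (R : realType) (N L : nat) (dx dv rho : R) (chi1 chi2 : 'I_(2 * L) -> R).
Hypotheses (dx_gt0 : 0 < dx) (dv_gt0 : 0 < dv) (rho_gt0 : 0 < rho)
  (chi1_gt0 : forall k, 0 < chi1 k) (chi2_gt0 : forall k, 0 < chi2 k).

Local Notation wf := (fun k => chi1 k * rho).
Local Notation wg := (fun k => chi2 k / rho).
Local Notation normD := (normD dx dv rho chi1 chi2).

Lemma wf_gt0 k : 0 < wf k. Proof. by rewrite mulr_gt0. Qed.
Lemma wg_gt0 k : 0 < wg k. Proof. by rewrite divr_gt0. Qed.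

Lemma normD_wsqnorm (p q : grid R N L) :
  normD p q = Num.sqrt (\sum_i dx * (wsqnorm dv wf (p i) + wsqnorm dv wg (q i))).
Proof.
congr Num.sqrt; apply: eq_bigr => i _; rewrite -big_split mulr_sumr.
by apply: eq_bigr => k _ /=; field; rewrite !gt_eqF.
Qed.

Lemma norm2_le_sqrt_sum (u P : 'I_N -> R) (K : R) :
  0 <= K -> (forall i, u i ^+ 2 <= K * P i) ->
  norm2 dx u <= Num.sqrt K * Num.sqrt (\sum_i dx * P i).
Proof.
move=> K_ge0 uP; rewrite -sqrtrM // ler_wsqrtr // mulr_sumr.
by apply: ler_sum => i _; rewrite [K * _]mulrCA ler_pM2l.
Qed.

Lemma norm2_vmom_le (u : 'I_N -> R) (a : 'I_(2 * L) -> R) (p q : grid R N L)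
    (alpha beta M M1 M2 : R) :
  (forall i, u i = alpha * vmom dv a (p i) - beta * vmom dv a (q i)) ->
  `|alpha| <= M -> `|beta| <= M ->
  vmom dv (fun k => a k ^+ 2) chi1 <= M1 -> vmom dv (fun k => a k ^+ 2) chi2 <= M2 ->
  norm2 dx u <= M * Num.sqrt (2 * Num.max (rho * M1) (rho^-1 * M2)) * normD p q.
Proof.
move=> u_eq alphaM betaM aM1 aM2; set m := Num.max _ _.
have M_ge0 : 0 <= M by apply: le_trans alphaM.
have mom_ge0 (chi : 'I_(2 * L) -> R) : (forall k, 0 < chi k) ->
    0 <= vmom dv (fun k => a k ^+ 2) chi.
  move=> chi_gt0; apply: sumr_ge0 => k _.
  by rewrite mulr_ge0 ?(ltW (chi_gt0 k)) // mulr_ge0 ?sqr_ge0 ?ltW.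
have m1 : rho * M1 <= m by rewrite le_max lexx.
have m2 : rho^-1 * M2 <= m by rewrite le_max lexx orbT.
have m_ge0 : 0 <= m.
  apply: le_trans (mulr_ge0 (ltW rho_gt0) _) m1.
  exact: le_trans (mom_ge0 _ chi1_gt0) aM1.
rewrite normD_wsqnorm -[M]ger0_norm // -sqrtr_sqr -sqrtrM ?sqr_ge0 //.
apply: norm2_le_sqrt_sum => [|i]; first by rewrite !mulr_ge0 ?sqr_ge0.
rewrite u_eq -mulrA; apply: sqr_lin_comb_le alphaM betaM _ _.
- apply: le_trans (vmom_sqr_le dv_gt0 wf_gt0 _ _) _.
  rewrite vmom_mulr; apply: ler_wpM2r; first exact: wsqnorm_ge0 dv_gt0 wf_gt0 _.
  by rewrite mulrC (le_trans _ m1) // ler_pM2l.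
- apply: le_trans (vmom_sqr_le dv_gt0 wg_gt0 _ _) _.
  rewrite vmom_mulr; apply: ler_wpM2r; first exact: wsqnorm_ge0 dv_gt0 wg_gt0 _.
  by rewrite mulrC (le_trans _ m2) // ler_pM2l ?invr_gt0.
Qed.

Lemma wsqnorm_proj (p q : grid R N L) i :
  \sum_k dv * chi1 k = 1 -> \sum_k dv * chi2 k = 1 ->
  wsqnorm dv wf (projf dv rho chi1 p q i) + wsqnorm dv wg (projg dv rho chi2 p q i)
    = rho / (rho ^+ 2 + 1) * (dens dv p i - dens dv q i) ^+ 2.
Proof.
move=> mass1 mass2; set c := (dens dv p i - dens dv q i) / (rho ^+ 2 + 1).
have rho21_neq0 : rho ^+ 2 + 1 != 0 by rewrite gt_eqF // ltr_wpDl ?sqr_ge0.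
have -> : wsqnorm dv wf (projf dv rho chi1 p q i) = c ^+ 2 * rho ^+ 3 * \sum_k dv * chi1 k.
  by rewrite mulr_sumr; apply: eq_bigr => k _; rewrite /projf -/c; field; rewrite !gt_eqF.
have -> : wsqnorm dv wg (projg dv rho chi2 p q i) = c ^+ 2 * rho * \sum_k dv * chi2 k.
  by rewrite mulr_sumr; apply: eq_bigr => k _; rewrite /projg -/c; field; rewrite !gt_eqF.
by rewrite mass1 mass2 /c; field.
Qed.

Lemma norm2_dens_hdiff (p q : grid R N L) :
  \sum_k dv * chi1 k = 1 -> \sum_k dv * chi2 k = 1 ->
  norm2 dx (dens dv (hdiff p q))
    = C_u rho * normD (projf dv rho chi1 p q) (projg dv rho chi2 p q).
Proof.
move=> mass1 mass2; rewrite normD_wsqnorm.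
under eq_bigr do rewrite wsqnorm_proj // mulrCA -dens_hdiff.
have rho21_gt0 : 0 < rho ^+ 2 + 1 by rewrite ltr_wpDl ?sqr_ge0.
rewrite -mulr_sumr /C_u -sqrtrM ?divr_ge0 ?ltW // mulrA.
by rewrite [_ / rho * _](_ : _ = 1) ?mul1r //; field; rewrite !gt_eqF.
Qed.

End Estimates.

Theorem lemma4p3 (R : realType) (N L : nat) (dx vstar dt lam rho : R)
    (chi1 chi2 : 'I_(2 * L) -> R)
    (Dlo0 Dhi0 Dlo1 Dhi1 Dlo2 Dhi2 Qhi1 Qhi2 : R)
    (f g : nat -> 'I_N -> 'I_(2 * L) -> R) :
  (0 < N)%N -> (0 < L)%N ->
  0 < dx -> 0 < vstar -> 0 < dt -> lam = dx / (2 * dt) -> 0 < rho ->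
  (forall k, 0 < chi1 k) -> (forall k, 0 < chi2 k) ->
  (forall k k', velidx k' = 1 - velidx k -> chi1 k = chi1 k') ->
  (forall k k', velidx k' = 1 - velidx k -> chi2 k = chi2 k') ->
  \sum_k dvel L vstar * chi1 k = 1 ->
  \sum_k dvel L vstar * chi2 k = 1 ->
  0 < Dlo1 -> Dlo1 <= Dmom (dvel L vstar) chi1 <= Dhi1 ->
  0 < Dlo2 -> Dlo2 <= Dmom (dvel L vstar) chi2 <= Dhi2 ->
  Qmom (dvel L vstar) chi1 <= Qhi1 ->
  Qmom (dvel L vstar) chi2 <= Qhi2 ->
  Dlo0 <= D0mom (dvel L vstar) rho chi1 chi2 <= Dhi0 ->
  (forall n, scheme_step dx dt (dvel L vstar) lam rho chi1 chi2
               (f n) (g n) (f n.+1) (g n.+1)) ->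
  forall n : nat,
    let dv := dvel L vstar in
    let h := hdiff (f n) (g n) in
    let nF := normD dx dv rho chi1 chi2 (f n) (g n) in
    let nPiF := normD dx dv rho chi1 chi2
                  (projf dv rho chi1 (f n) (g n)) (projg dv rho chi2 (f n) (g n)) in
    let nPerpF := normD dx dv rho chi1 chi2
                  (perpf dv rho chi1 (f n) (g n)) (perpg dv rho chi2 (f n) (g n)) in
    [/\ norm2 dx (dens dv h) = C_u rho * nPiF,
        norm2 dx (flux_mom dv h) <= C_J1 rho Dhi1 Dhi2 * nF,
        norm2 dx (flux_mom dv h) <= C_J1 rho Dhi1 Dhi2 * nPerpF,
        norm2 dx (S_mom dv (D0mom dv rho chi1 chi2) h)
          <= C_S rho Dlo0 Dhi0 Dlo1 Dlo2 Qhi1 Qhi2 * nPerpF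
      & norm2 dx (fun i => rho^-1 * flux_mom dv (f n) i - rho * flux_mom dv (g n) i)
          <= C_J2 rho Dhi1 Dhi2 * nPerpF].
Proof.
move=> _ L_gt0 dx_gt0 vstar_gt0 _ _ rho_gt0 chi1_gt0 chi2_gt0 chi1_even chi2_even mass1 mass2.
move=> Dlo1_gt0 /andP[D1_lo D1_hi] Dlo2_gt0 /andP[D2_lo D2_hi] Q1_hi Q2_hi.
move=> /andP[D0_lo D0_hi] _ n dv h nF nPiF nPerpF.
have dv_gt0 : 0 < dv by rewrite /dv /dvel divr_gt0 ?ltr0n.
have norm1 : `|1 : R| <= 1 by rewrite normr1.
have D0_gt0 : 0 < D0mom dv rho chi1 chi2.
  by apply: D0mom_gt0; [exact: lt_le_trans D1_lo | exact: lt_le_trans D2_lo].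
have S1_hi := vmom_vel_centered_sqr_le mass1 D0_gt0 D0_lo D0_hi Dlo1_gt0 D1_lo Q1_hi.
have S2_hi := vmom_vel_centered_sqr_le mass2 D0_gt0 D0_lo D0_hi Dlo2_gt0 D2_lo Q2_hi.
split.
- exact: norm2_dens_hdiff.
- rewrite -[C_J1 _ _ _]mul1r; apply:
    (norm2_vmom_le dx_gt0 dv_gt0 rho_gt0 chi1_gt0 chi2_gt0 _ norm1 norm1 D1_hi D2_hi).
  by move=> i; rewrite !mul1r -vmom_hdiff.
- rewrite -[C_J1 _ _ _]mul1r; apply:
    (norm2_vmom_le dx_gt0 dv_gt0 rho_gt0 chi1_gt0 chi2_gt0 _ norm1 norm1 D1_hi D2_hi).
  by move=> i; rewrite !mul1r vmom_vel_perpf ?vmom_vel_perpg // -vmom_hdiff.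
- rewrite -[C_S _ _ _ _ _ _ _]mul1r; apply:
    (norm2_vmom_le dx_gt0 dv_gt0 rho_gt0 chi1_gt0 chi2_gt0 _ norm1 norm1 S1_hi S2_hi).
  move=> i; rewrite !mul1r vmom_perp_sub -?vmom_hdiff //.
  by rewrite !vmom_centered // D0mom_balance.
- apply: (norm2_vmom_le dx_gt0 dv_gt0 rho_gt0 chi1_gt0 chi2_gt0 _ _ _ D1_hi D2_hi).
  + by move=> i; rewrite vmom_vel_perpf ?vmom_vel_perpg.
  + by rewrite ger0_norm ?le_max ?lexx // invr_ge0 ltW.
  + by rewrite ger0_norm ?le_max ?lexx ?orbT // ltW.
Qed.
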